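(* Let $\varepsilon\in(0,1)$ and let $\mu,\lambda$ be positive integers with $\lambda\le(1-\varepsilon)e\mu$. Consider the $(\mu,\lambda)$ EA on OneMax with populations $P_0,P_1,\dots$, and let $g$ be the potential defined in the context. Then, for $n$ sufficiently large, for all $t\ge0$, \[E[g(P_{t+1})\mid P_t]\le g(P_t)+2\lambda.\]
   Context: $f$ is OneMax, $f(x)=\sum_i x_i$. The $(\mu,\lambda)$ EA: $P_0$ consists of $\mu$ independent uniformly random points of $\{0,1\}^n$; in each generation $\lambda$ offspring are created independently, each by choosing a parent uniformly at random from $P_t$ and flipping each bit of a copy independently with probability $1/n$; $P_{t+1}$ consists of the $\mu$ offspring with largest $f$-values (ties broken randomly). Potential: $\tau=\frac{4e}{\varepsilon}$, $\alpha=1-\frac1\tau\ln\big(1+\frac1\tau\big)$, $f_0=\lceil\alpha n\rceil$, $g(x)=\tau^{f(x)-f_0}$ if $f(x)\ge f_0$ and $g(x)=0$ otherwise; for a population (multiset) $P$, $g(P)=\sum_{x\in P}g(x)$. *)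

From Stdlib Require Import Reals Lra Lia ZArith List.
Import ListNotations.
Open Scope R_scope.

Fixpoint bitstrings (n : nat) : list (list bool) :=
  match n with
  | O => [[]]
  | S k => map (cons false) (bitstrings k) ++ map (cons true) (bitstrings k)
  end.

Fixpoint onemax (x : list bool) : nat :=
  match x with
  | [] => O
  | b :: x' => ((if b then 1 else 0) + onemax x')%nat
  end.

Fixpoint flip (x m : list bool) : list bool :=
  match x, m with
  | b :: x', c :: m' => xorb b c :: flip x' m'
  | _, _ => x
  end.

(** Probability that standard bit mutation (rate 1/n) flips exactly the mask m. *)
Definition mask_prob (n : nat) (m : list bool) : R :=
  (/ INR n) ^ (onemax m) * (1 - / INR n) ^ (n - onemax m).

(** Distribution (list of weight/outcome pairs) of one offspring: parent chosen
    uniformly at random from the population P (a multiset given as a list),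
    then standard bit mutation. *)
Definition offspring_dist (n : nat) (P : list (list bool)) : list (R * list bool) :=
  flat_map (fun x => map (fun m => (/ INR (length P) * mask_prob n m, flip x m))
                         (bitstrings n)) P.

(** Expectation of F over k independent draws from the finite distribution d. *)
Fixpoint expect_iid {A : Type} (d : list (R * A)) (k : nat) (F : list A -> R) : R :=
  match k with
  | O => F []
  | S k' => fold_right (fun wa acc => fst wa * expect_iid d k' (fun l => F (snd wa :: l)) + acc) 0 d
  end.

Fixpoint insert_desc (x : list bool) (l : list (list bool)) : list (list bool) :=
  match l with
  | [] => [x]
  | y :: l' => if Nat.leb (onemax y) (onemax x) then x :: l else y :: insert_desc x l'
  end.

Definition sort_desc (l : list (list bool)) : list (list bool) :=
  fold_right insert_desc [] l.

(** Selection of the mu offspring with the largest fitness (ties broken by a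
    fixed rule; the potential only depends on fitness values). *)
Definition select (mu : nat) (O : list (list bool)) : list (list bool) :=
  firstn mu (sort_desc O).

(** Ceiling of a real number: up y is the unique integer in (y, y+1]. *)
Definition Rceil (x : R) : Z := (1 - up (- x))%Z.

Definition tau (eps : R) : R := 4 * exp 1 / eps.
Definition alpha (eps : R) : R := 1 - / tau eps * ln (1 + / tau eps).
Definition f0 (eps : R) (n : nat) : Z := Rceil (alpha eps * INR n).

Definition g (eps : R) (n : nat) (x : list bool) : R :=
  if Z.leb (f0 eps n) (Z.of_nat (onemax x))
  then tau eps ^ Z.to_nat (Z.of_nat (onemax x) - f0 eps n)
  else 0.

Definition gpop (eps : R) (n : nat) (P : list (list bool)) : R :=
  fold_right (fun x acc => g eps n x + acc) 0 P.

From Stdlib Require Import Reals List Lra Lia ZArith Permutation.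
Import ListNotations.
Open Scope R_scope.

(** Let [T = tau eps], [F = f0], and for a parent [x] with [k] ones let
    [a = 1 - (1 - 1/T)/n], [b = 1 + (T-1)/n].  The argument has three parts.
    - Mutation: by the generating function of standard bit mutation,
      [E[T^|y|] = (T a)^k b^(n-k)] for the mutant [y] of [x]; since
      [g(y) <= T^(|y| - F)], a parent with [k >= F] yields
      [E[g(y)] <= T^(k-F) a^k b^(n-k) <= beta * g(x)] with
      [beta = exp(-(1-1/T) alpha + (T-1)(1-alpha))], using [1 + z <= e^z]
      and [k/n >= alpha]; a parent with [k < F] yields [E[g(y)] <= beta <= 1].
    - Offspring: a uniformly chosen parent therefore gives
      [E[g(offspring)] <= (beta g(P) + mu)/mu], and since [g(P')] is additive
      over the lambda i.i.d. offspring, their total has expectation lambda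
      times that.  Selection keeps a sub-multiset, and [g >= 0].
    - Constants: the choice of [tau] and [alpha] gives [beta (1-eps) e <= 1],
      hence [lambda beta <= mu] and the bound [g(P) + lambda <= g(P) + 2 lambda]
      holds for every [n >= 2]. *)

(** ** Finite sums and expectations *)

Definition sumR (l : list R) : R := fold_right Rplus 0 l.

Lemma sumR_app (l1 l2 : list R) : sumR (l1 ++ l2) = sumR l1 + sumR l2.
Proof. induction l1 as [|a l1 IH]; simpl; [ring | rewrite IH; ring]. Qed.

Lemma sumR_perm (l1 l2 : list R) : Permutation l1 l2 -> sumR l1 = sumR l2.
Proof. induction 1; simpl; lra. Qed.

Lemma sumR_map_scal {A} (c : R) (h : A -> R) (l : list A) :
  sumR (map (fun x => c * h x) l) = c * sumR (map h l).
Proof. induction l as [|a l IH]; simpl; [ring | rewrite IH; ring]. Qed.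

Lemma sumR_map_add {A} (h1 h2 : A -> R) (l : list A) :
  sumR (map (fun x => h1 x + h2 x) l) = sumR (map h1 l) + sumR (map h2 l).
Proof. induction l as [|a l IH]; simpl; [ring | rewrite IH; ring]. Qed.

Lemma sumR_map_const {A} (c : R) (l : list A) :
  sumR (map (fun _ => c) l) = INR (length l) * c.
Proof.
  induction l as [|a l IH]; simpl length; [simpl; ring |].
  rewrite S_INR. simpl. rewrite IH. ring.
Qed.

Lemma sumR_map_le {A} (h1 h2 : A -> R) (l : list A) :
  (forall x, In x l -> h1 x <= h2 x) -> sumR (map h1 l) <= sumR (map h2 l).
Proof. induction l as [|a l IH]; simpl; intros H; [lra | apply Rplus_le_compat; auto]. Qed.

Lemma sumR_map_nonneg {A} (h : A -> R) (l : list A) :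
  (forall x, 0 <= h x) -> 0 <= sumR (map h l).
Proof. intros Hh. induction l as [|a l IH]; simpl; [lra | pose proof (Hh a); lra]. Qed.

Lemma sumR_map_firstn {A} (h : A -> R) (k : nat) (l : list A) :
  (forall x, 0 <= h x) -> sumR (map h (firstn k l)) <= sumR (map h l).
Proof.
  intros Hh. revert k; induction l as [|a l IH]; intros [|k]; simpl; try lra.
  - pose proof (Hh a). pose proof (sumR_map_nonneg h l Hh). lra.
  - specialize (IH k). lra.
Qed.

Definition expect1 {A} (d : list (R * A)) (h : A -> R) : R :=
  sumR (map (fun wa => fst wa * h (snd wa)) d).

Lemma expect1_le {A} (d : list (R * A)) (h1 h2 : A -> R) :
  Forall (fun wa => 0 <= fst wa) d -> (forall a, h1 a <= h2 a) ->
  expect1 d h1 <= expect1 d h2.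
Proof.
  intros Hd H. apply sumR_map_le. intros wa Hin.
  apply Rmult_le_compat_l; [exact (proj1 (Forall_forall _ _) Hd wa Hin) | apply H].
Qed.

Lemma expect1_ext {A} (d : list (R * A)) (h1 h2 : A -> R) :
  (forall a, h1 a = h2 a) -> expect1 d h1 = expect1 d h2.
Proof. intros H. unfold expect1. f_equal. apply map_ext. intros wa. rewrite H; reflexivity. Qed.

Lemma expect_iid_S {A} (d : list (R * A)) (k : nat) (F : list A -> R) :
  expect_iid d (S k) F = expect1 d (fun a => expect_iid d k (fun l => F (a :: l))).
Proof.
  assert (Hfold : forall (h : A -> R) (e : list (R * A)),
    fold_right (fun wa acc => fst wa * h (snd wa) + acc) 0 e = expect1 e h).
  { intros h e. unfold expect1.
    induction e as [|wa e IH]; simpl; [reflexivity | rewrite IH; reflexivity]. }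
  exact (Hfold (fun a => expect_iid d k (fun l => F (a :: l))) d).
Qed.

Lemma expect_iid_ext {A} (d : list (R * A)) (k : nat) (F G : list A -> R) :
  (forall l, F l = G l) -> expect_iid d k F = expect_iid d k G.
Proof.
  revert F G; induction k as [|k IH]; intros F G H; [apply H |].
  rewrite !expect_iid_S. apply expect1_ext. intros a. apply IH. auto.
Qed.

Lemma expect_iid_le {A} (d : list (R * A)) (k : nat) (F G : list A -> R) :
  Forall (fun wa => 0 <= fst wa) d -> (forall l, F l <= G l) ->
  expect_iid d k F <= expect_iid d k G.
Proof.
  intros Hd. revert F G; induction k as [|k IH]; intros F G H; [apply H |].
  rewrite !expect_iid_S. apply expect1_le; auto.
Qed.

Lemma expect_iid_sum {A} (d : list (R * A)) (h : A -> R) :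
  expect1 d (fun _ => 1) = 1 ->
  forall (k : nat) (c : R),
  expect_iid d k (fun l => c + sumR (map h l)) = c + INR k * expect1 d h.
Proof.
  intros Hmass k; induction k as [|k IH]; intros c; [simpl; ring |].
  rewrite expect_iid_S.
  rewrite (expect1_ext _ _ (fun a => (c + INR k * expect1 d h) * 1 + h a)).
  - unfold expect1 at 1.
    rewrite (map_ext _ (fun wa => (c + INR k * expect1 d h) * (fst wa * 1) + fst wa * h (snd wa)))
      by (intros; ring).
    rewrite sumR_map_add, sumR_map_scal. fold (expect1 d (fun _ => 1)) (expect1 d h).
    rewrite Hmass, S_INR. ring.
  - intros a.
    rewrite (expect_iid_ext _ _ _ (fun l => (c + h a) + sumR (map h l))) by (intros; simpl; ring).
    rewrite IH. ring.
Qed.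

Lemma tau_gt_1 (eps : R) : 0 < eps < 1 -> 1 < tau eps.
Proof.
  intros He. pose proof (exp_ineq1 1 ltac:(lra)) as He1. unfold tau.
  apply (Rmult_lt_reg_r eps); [lra |].
  replace (4 * exp 1 / eps * eps) with (4 * exp 1) by (field; lra). lra.
Qed.

Lemma g_nonneg (eps : R) (n : nat) (x : list bool) : 0 < eps < 1 -> 0 <= g eps n x.
Proof.
  intros He. pose proof (tau_gt_1 eps He). unfold g.
  destruct (Z.leb _ _); [apply pow_le; lra | lra].
Qed.

Lemma gpop_sumR (eps : R) (n : nat) (P : list (list bool)) :
  gpop eps n P = sumR (map (g eps n) P).
Proof. induction P as [|x P IH]; [reflexivity | simpl; rewrite <- IH; reflexivity]. Qed.

Lemma insert_desc_perm (x : list bool) (l : list (list bool)) :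
  Permutation (insert_desc x l) (x :: l).
Proof.
  induction l as [|y l IH]; simpl; [reflexivity |].
  destruct (Nat.leb _ _); [reflexivity |].
  eapply perm_trans; [apply perm_skip, IH | apply perm_swap].
Qed.

Lemma sort_desc_perm (l : list (list bool)) : Permutation (sort_desc l) l.
Proof.
  induction l as [|x l IH]; simpl; [reflexivity |].
  eapply perm_trans; [apply insert_desc_perm | apply perm_skip, IH].
Qed.

(** Selection keeps a sub-multiset of the offspring, so it cannot increase
    the (nonnegative) potential. *)
Lemma gpop_select (eps : R) (n mu : nat) (O : list (list bool)) :
  0 < eps < 1 -> gpop eps n (select mu O) <= gpop eps n O.
Proof.
  intros He. unfold select. rewrite !gpop_sumR.
  rewrite (sumR_perm (map (g eps n) O) (map (g eps n) (sort_desc O)))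
    by (apply Permutation_map, Permutation_sym, sort_desc_perm).
  apply sumR_map_firstn. intros x. apply g_nonneg; exact He.
Qed.

(** ** Standard bit mutation *)

Definition mut_expect (n : nat) (x : list bool) (h : list bool -> R) : R :=
  sumR (map (fun m => mask_prob n m * h (flip x m)) (bitstrings n)).

Lemma bitstrings_length (k : nat) (m : list bool) : In m (bitstrings k) -> length m = k.
Proof.
  revert m; induction k as [|k IH]; simpl; intros m H.
  - destruct H as [<- | []]; reflexivity.
  - apply in_app_or in H.
    destruct H as [H | H]; apply in_map_iff in H; destruct H as [m' [<- Hm]]; simpl; f_equal; auto.
Qed.

Lemma onemax_le_length (x : list bool) : (onemax x <= length x)%nat.
Proof. induction x as [|[|] x IH]; simpl; lia. Qed.

(** Generating function of bit flips: summing over all masks [m] with weights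
    [p^|m| q^(n-|m|)] the monomial [t^|x xor m|] factorizes over the positions. *)
Lemma flip_generating_function (p q t : R) (x : list bool) :
  sumR (map (fun m => p ^ onemax m * q ^ (length x - onemax m) * t ^ onemax (flip x m))
            (bitstrings (length x)))
  = (q * t + p) ^ onemax x * (q + p * t) ^ (length x - onemax x).
Proof.
  induction x as [|b x IH]; [simpl; ring |].
  set (term := fun m => p ^ onemax m * q ^ (length x - onemax m) * t ^ onemax (flip x m)).
  simpl length. simpl bitstrings. rewrite map_app, sumR_app, !map_map.
  match goal with |- sumR (map ?f0 _) + sumR (map ?f1 _) = _ =>
    rewrite (map_ext_in f0 (fun m => (q * (if b then t else 1)) * term m)),
            (map_ext_in f1 (fun m => (p * (if b then 1 else t)) * term m)) end.
  - rewrite !sumR_map_scal. unfold term. rewrite IH. pose proof (onemax_le_length x).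
    destruct b; simpl onemax.
    + simpl. ring.
    + replace (S (length x) - onemax x)%nat with (S (length x - onemax x)) by lia. simpl. ring.
  - intros m _. unfold term. destruct b; simpl; ring.
  - intros m Hm. apply bitstrings_length in Hm. pose proof (onemax_le_length m).
    unfold term. simpl onemax.
    replace (S (length x) - onemax m)%nat with (S (length x - onemax m)) by lia.
    destruct b; simpl; ring.
Qed.

Lemma mut_expect_pow (n : nat) (x : list bool) (t : R) : length x = n ->
  mut_expect n x (fun y => t ^ onemax y)
  = ((1 - / INR n) * t + / INR n) ^ onemax x * ((1 - / INR n) + / INR n * t) ^ (n - onemax x).
Proof.
  intros Hx. subst n. rewrite <- flip_generating_function. unfold mut_expect.
  reflexivity.
Qed.

Lemma mut_expect_mass (n : nat) (x : list bool) : length x = n ->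
  mut_expect n x (fun _ => 1) = 1.
Proof.
  intros Hx. transitivity (mut_expect n x (fun y => 1 ^ onemax y)).
  - unfold mut_expect. f_equal. apply map_ext. intros m. rewrite pow1. reflexivity.
  - rewrite mut_expect_pow by exact Hx.
    replace ((1 - / INR n) * 1 + / INR n) with 1 by ring.
    replace (1 - / INR n + / INR n * 1) with 1 by ring.
    rewrite !pow1. ring.
Qed.

Lemma mask_prob_nonneg (n : nat) (m : list bool) : (0 < n)%nat -> 0 <= mask_prob n m.
Proof.
  intros Hn. assert (Hn1 : 1 <= INR n) by (apply (le_INR 1); lia).
  assert (0 < / INR n <= 1).
  { split; [apply Rinv_0_lt_compat; lra | rewrite <- Rinv_1; apply Rinv_le_contravar; lra]. }
  unfold mask_prob. apply Rmult_le_pos; apply pow_le; lra.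
Qed.

Lemma mut_expect_le (n : nat) (x : list bool) (h1 h2 : list bool -> R) :
  (0 < n)%nat -> (forall y, h1 y <= h2 y) -> mut_expect n x h1 <= mut_expect n x h2.
Proof.
  intros Hn H. apply sumR_map_le. intros m _.
  apply Rmult_le_compat_l; [apply mask_prob_nonneg; exact Hn | apply H].
Qed.

(** ** Exponential estimates for one mutation *)

(** Exponent of the multiplicative drift of [T^|y|] at relative fitness [alpha]. *)
Definition drift_exponent (T alpha0 : R) : R := -(1 - / T) * alpha0 + (T - 1) * (1 - alpha0).

Lemma exp_pow_nat (c : R) (k : nat) : exp c ^ k = exp (INR k * c).
Proof.
  induction k as [|k IH]; [simpl; rewrite Rmult_0_l, exp_0; ring |].
  rewrite S_INR. simpl pow. rewrite IH, <- exp_plus. f_equal; ring.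
Qed.

(** With [a = 1 - (1-1/T)/n] and [b = 1 + (T-1)/n], the bound [1 + z <= e^z]
    gives [a^k b^(n-k) <= exp(-(1-1/T) k/n + (T-1)(1-k/n))]. *)
Lemma mutation_factor_exp (T : R) (n k : nat) : 1 < T -> (0 < n)%nat -> (k <= n)%nat ->
  (1 - (1 - / T) / INR n) ^ k * (1 + (T - 1) / INR n) ^ (n - k)
  <= exp (-(1 - / T) * (INR k / INR n) + (T - 1) * (1 - INR k / INR n)).
Proof.
  intros HT Hn Hk. assert (Hn1 : 1 <= INR n) by (apply (le_INR 1); lia).
  assert (Hw : 0 < 1 - / T < 1).
  { assert (0 < / T < 1)
      by (split; [apply Rinv_0_lt_compat | rewrite <- Rinv_1; apply Rinv_lt_contravar]; lra).
    lra. }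
  set (w := 1 - / T) in *.
  assert (Hv : 0 < / INR n <= 1).
  { split; [apply Rinv_0_lt_compat; lra | rewrite <- Rinv_1; apply Rinv_le_contravar; lra]. }
  unfold Rdiv. set (v := / INR n) in *.
  apply Rle_trans with (exp (-(w * v)) ^ k * exp ((T - 1) * v) ^ (n - k)).
  - pose proof (exp_ineq1_le (-(w * v))). pose proof (exp_ineq1_le ((T - 1) * v)).
    apply Rmult_le_compat; try (apply pow_le; nra); apply pow_incr; split; nra.
  - rewrite !exp_pow_nat, <- exp_plus, minus_INR by lia.
    assert (INR n * v = 1) by (unfold v; field; lra).
    right. f_equal. nra.
Qed.

(** For a parent with at least [alpha n] ones the factor is at most the drift
    [exp (drift_exponent T alpha)], the exponent being decreasing in [k/n]. *)
Lemma mutation_factor_bound (T alpha0 : R) (n k : nat) :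
  1 < T -> (0 < n)%nat -> alpha0 * INR n <= INR k -> (k <= n)%nat ->
  (1 - (1 - / T) / INR n) ^ k * (1 + (T - 1) / INR n) ^ (n - k)
  <= exp (drift_exponent T alpha0).
Proof.
  intros HT Hn Hk Hkn. eapply Rle_trans; [apply mutation_factor_exp; auto |].
  assert (Hn0 : 0 < INR n) by (apply lt_0_INR; lia).
  assert (Hka : alpha0 <= INR k / INR n).
  { apply (Rmult_le_reg_r (INR n)); [exact Hn0 |]. unfold Rdiv.
    rewrite Rmult_assoc, Rinv_l by lra. lra. }
  assert (Hi : 0 < / T) by (apply Rinv_0_lt_compat; lra).
  assert (/ T < T) by (apply Rlt_trans with 1; [rewrite <- Rinv_1; apply Rinv_lt_contravar | ]; lra).
  apply Rlt_le in Hi. unfold drift_exponent.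
  destruct (Rle_lt_or_eq_dec _ _ Hka) as [Hlt | Heq]; [| rewrite Heq; right; reflexivity].
  left. apply exp_increasing. nra.
Qed.

(** Moving [j] from [k] up to [F] in [c^j b^(n-j)] trades factors [b] for [c >= b]. *)
Lemma pow_shift_le (b c : R) (k F n : nat) : 0 <= b <= c -> (k <= F <= n)%nat ->
  c ^ k * b ^ (n - k) <= c ^ F * b ^ (n - F).
Proof.
  intros Hbc HkF.
  replace (n - k)%nat with ((F - k) + (n - F))%nat by lia.
  replace (c ^ F) with (c ^ k * c ^ (F - k)) by (rewrite <- pow_add; f_equal; lia).
  rewrite pow_add.
  assert (b ^ (F - k) <= c ^ (F - k)) by (apply pow_incr; lra).
  assert (0 <= c ^ k * b ^ (n - F)) by (apply Rmult_le_pos; apply pow_le; lra).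
  nra.
Qed.

(** ** The constants [tau], [alpha] and the drift [beta] *)

Definition beta (eps : R) : R := exp (drift_exponent (tau eps) (alpha eps)).

(** With [u = 1/tau] and [L = ln(1+u)] we have [1 - alpha = u L], [0 < L < u],
    and [u = eps/(4e) <= eps/8]. *)
Lemma alpha_facts (eps : R) : 0 < eps < 1 ->
  0 < alpha eps < 1 /\ drift_exponent (tau eps) (alpha eps) <= -1 + eps / 2.
Proof.
  intros He. pose proof (tau_gt_1 eps He) as HT.
  assert (He2 : 2 < exp 1) by (pose proof (exp_ineq1 1); lra).
  assert (Hu : / tau eps = eps / (4 * exp 1)) by (unfold tau; field; lra).
  set (u := / tau eps) in *.
  assert (HuT : tau eps * u = 1) by (unfold u; field; lra).
  assert (Hu0 : 0 < u) by (unfold u; apply Rinv_0_lt_compat; lra).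
  assert (Hu8 : 2 * u <= eps / 2).
  { rewrite Hu. apply (Rmult_le_reg_r (4 * exp 1)); [lra |].
    replace (2 * (eps / (4 * exp 1)) * (4 * exp 1)) with (2 * eps) by (field; lra). nra. }
  set (L := ln (1 + u)).
  assert (HL0 : 0 < L) by (unfold L; rewrite <- ln_1; apply ln_increasing; lra).
  assert (HLu : L < u).
  { unfold L. rewrite <- (ln_exp u) at 2. apply ln_increasing; [lra | apply exp_ineq1; lra]. }
  assert (Ha : alpha eps = 1 - u * L) by reflexivity.
  split; [rewrite Ha; nra |].
  unfold drift_exponent. fold u. rewrite Ha.
  replace ((tau eps - 1) * (1 - (1 - u * L))) with ((tau eps * u) * L - u * L) by ring.
  rewrite HuT. nra.
Qed.

Lemma beta_le_1 (eps : R) : 0 < eps < 1 -> beta eps <= 1.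
Proof.
  intros He. destruct (alpha_facts eps He) as [_ HE]. unfold beta. rewrite <- exp_0.
  left. apply exp_increasing. lra.
Qed.

Lemma beta_reproduction (eps : R) : 0 < eps < 1 -> beta eps * ((1 - eps) * exp 1) <= 1.
Proof.
  intros He. destruct (alpha_facts eps He) as [_ HE].
  assert (Hb : beta eps <= exp (eps / 2) * exp (-1)).
  { unfold beta. rewrite <- exp_plus.
    destruct HE as [HE | HE]; [left; apply exp_increasing; lra | rewrite HE; right; f_equal; ring]. }
  assert (Hinv : exp (-1) * exp 1 = 1)
    by (rewrite <- exp_plus; replace (-1 + 1) with 0 by ring; apply exp_0).
  assert (Hone : exp (eps / 2) * (1 - eps / 2) <= 1).
  { pose proof (exp_ineq1_le (- (eps / 2))).
    assert (exp (eps / 2) * exp (- (eps / 2)) = 1) 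
      by (rewrite <- exp_plus; replace (eps / 2 + - (eps / 2)) with 0 by ring; apply exp_0).
    pose proof (exp_pos (eps / 2)). nra. }
  pose proof (exp_pos (eps / 2)). pose proof (exp_pos 1). pose proof (exp_pos (-1)).
  apply Rle_trans with (exp (eps / 2) * exp (-1) * ((1 - eps) * exp 1)).
  - apply Rmult_le_compat_r; [nra | exact Hb].
  - replace (exp (eps / 2) * exp (-1) * ((1 - eps) * exp 1))
      with (exp (eps / 2) * (1 - eps) * (exp (-1) * exp 1)) by ring.
    rewrite Hinv. nra.
Qed.

Lemma Rceil_spec (x : R) : x <= IZR (Rceil x) < x + 1.
Proof. unfold Rceil. destruct (archimed (- x)). rewrite minus_IZR. simpl. lra. Qed.

Lemma f0_nat (eps : R) (n : nat) : 0 < alpha eps < 1 ->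
  exists F : nat, f0 eps n = Z.of_nat F /\ alpha eps * INR n <= INR F /\ (F <= n)%nat.
Proof.
  intros Ha. destruct (Rceil_spec (alpha eps * INR n)) as [Hlo Hhi]. pose proof (pos_INR n).
  assert (Hz : (0 <= f0 eps n)%Z) by (apply le_IZR; unfold f0; nra).
  exists (Z.to_nat (f0 eps n)). rewrite Z2Nat.id by exact Hz.
  rewrite (INR_IZR_INZ (Z.to_nat (f0 eps n))), Z2Nat.id by exact Hz.
  assert (Hn : IZR (f0 eps n) < IZR (Z.of_nat n) + 1) by (rewrite <- INR_IZR_INZ; unfold f0; nra).
  rewrite <- plus_IZR in Hn. apply lt_IZR in Hn.
  repeat split; [unfold f0; lra | lia].
Qed.

Lemma g_above (eps : R) (n F : nat) (x : list bool) :
  f0 eps n = Z.of_nat F -> (F <= onemax x)%nat -> g eps n x = tau eps ^ (onemax x - F).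
Proof.
  intros HF Hx. unfold g. rewrite HF, (proj2 (Z.leb_le _ _)) by lia. f_equal. lia.
Qed.

Lemma g_le_pow (eps : R) (n F : nat) (y : list bool) : 0 < eps < 1 ->
  f0 eps n = Z.of_nat F -> g eps n y <= / tau eps ^ F * tau eps ^ onemax y.
Proof.
  intros He HF. pose proof (tau_gt_1 eps He) as HT.
  assert (0 < tau eps ^ F) by (apply pow_lt; lra).
  destruct (Nat.leb_spec F (onemax y)) as [Hle | Hlt].
  - rewrite (g_above _ _ _ _ HF Hle).
    replace (tau eps ^ onemax y) with (tau eps ^ F * tau eps ^ (onemax y - F))
      by (rewrite <- pow_add; f_equal; lia).
    right. field. lra.
  - unfold g. rewrite HF, (proj2 (Z.leb_gt _ _)) by lia.
    apply Rmult_le_pos; [left; apply Rinv_0_lt_compat; lra | apply pow_le; lra].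
Qed.

(** Dominating [g] by [T^(|y| - F)] and using the generating function of
    mutation: [E[g(y)] <= T^(-F) (T a)^k b^(n-k)] for a parent with [k] ones. *)
Lemma mutant_potential_pow (eps : R) (n F : nat) (x : list bool) :
  0 < eps < 1 -> (0 < n)%nat -> length x = n -> f0 eps n = Z.of_nat F ->
  mut_expect n x (g eps n)
  <= / tau eps ^ F * ((tau eps * (1 - (1 - / tau eps) / INR n)) ^ onemax x
                      * (1 + (tau eps - 1) / INR n) ^ (n - onemax x)).
Proof.
  intros He Hn Hx HF. pose proof (tau_gt_1 eps He) as HT.
  assert (Hn0 : 0 < INR n) by (apply lt_0_INR; exact Hn).
  eapply Rle_trans; [apply mut_expect_le; [exact Hn | intros y; apply (g_le_pow eps n F y He HF)] |].
  unfold mut_expect.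
  rewrite (map_ext _ (fun m => / tau eps ^ F * (mask_prob n m * tau eps ^ onemax (flip x m))))
    by (intros; ring).
  rewrite sumR_map_scal. fold (mut_expect n x (fun y => tau eps ^ onemax y)).
  rewrite mut_expect_pow by exact Hx. right. f_equal. f_equal; f_equal; field; lra.
Qed.

(** Parents above the threshold contract by [beta]; parents
    below it produce expected potential at most [beta <= 1]. *)
Lemma mutant_potential (eps : R) (n : nat) (x : list bool) :
  0 < eps < 1 -> (2 <= n)%nat -> length x = n ->
  mut_expect n x (g eps n) <= beta eps * g eps n x + 1.
Proof.
  intros He Hn Hx. pose proof (tau_gt_1 eps He) as HT.
  destruct (alpha_facts eps He) as [Ha _].
  destruct (f0_nat eps n Ha) as [F [HF [HFa HFn]]].
  eapply Rle_trans; [apply (mutant_potential_pow eps n F x He ltac:(lia) Hx HF) |].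
  assert (Hn2 : 2 <= INR n) by (apply (le_INR 2); lia).
  assert (Hk : (onemax x <= n)%nat) by (rewrite <- Hx; apply onemax_le_length).
  set (T := tau eps) in *. set (k := onemax x) in *.
  set (a := 1 - (1 - / T) / INR n). set (b := 1 + (T - 1) / INR n).
  assert (HT0 : 0 < T ^ F) by (apply pow_lt; lra).
  assert (Hv : 0 < / INR n <= / 2)
    by (split; [apply Rinv_0_lt_compat | apply Rinv_le_contravar]; lra).
  assert (Hu : 0 < / T < 1)
    by (split; [apply Rinv_0_lt_compat | rewrite <- Rinv_1; apply Rinv_lt_contravar]; lra).
  assert (HTu : T * / T = 1) by (field; lra).
  assert (Ha0 : 0 < a) by (unfold a, Rdiv; nra).
  assert (Hb0 : 0 <= b <= T * a) by (unfold a, b, Rdiv; split; nra).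
  destruct (Nat.leb_spec F k) as [HFk | HkF].
  - (* above the threshold: [g(x) = T^(k-F)] and [a^k b^(n-k) <= beta] *)
    assert (Hab : a ^ k * b ^ (n - k) <= beta eps).
    { apply mutation_factor_bound; [exact HT | lia | | exact Hk].
      apply Rle_trans with (INR F); [exact HFa | apply le_INR; exact HFk]. }
    rewrite (g_above _ _ _ _ HF HFk). fold T k.
    replace (/ T ^ F * ((T * a) ^ k * b ^ (n - k))) with (T ^ (k - F) * (a ^ k * b ^ (n - k))).
    + assert (0 < T ^ (k - F)) by (apply pow_lt; lra). nra.
    + rewrite Rpow_mult_distr.
      replace (T ^ k) with (T ^ F * T ^ (k - F)) by (rewrite <- pow_add; f_equal; lia).
      field. lra.
  - (* below the threshold: shift [k] up to [F], where the factor is at most [beta <= 1] *)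
    assert (Hshift : (T * a) ^ k * b ^ (n - k) <= (T * a) ^ F * b ^ (n - F))
      by (apply pow_shift_le; [lra | lia]).
    assert (Hab : a ^ F * b ^ (n - F) <= beta eps)
      by (apply mutation_factor_bound; [exact HT | lia | exact HFa | exact HFn]).
    pose proof (beta_le_1 eps He). pose proof (g_nonneg eps n x He).
    assert (/ T ^ F * ((T * a) ^ F * b ^ (n - F)) = a ^ F * b ^ (n - F))
      by (rewrite Rpow_mult_distr; field; lra).
    assert (0 < / T ^ F) by (apply Rinv_0_lt_compat; exact HT0).
    assert (0 <= beta eps) by (unfold beta; left; apply exp_pos).
    nra.
Qed.

Lemma offspring_expect (n : nat) (P : list (list bool)) (h : list bool -> R) :
  expect1 (offspring_dist n P) h = / INR (length P) * sumR (map (fun x => mut_expect n x h) P).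
Proof.
  unfold offspring_dist. generalize (/ INR (length P)). intros c.
  induction P as [|x P IH]; [simpl; unfold expect1; simpl; ring |].
  simpl flat_map. unfold expect1 in *. rewrite map_app, sumR_app, IH, map_map. simpl.
  rewrite (map_ext _ (fun m => c * (mask_prob n m * h (flip x m)))) by (intros; ring).
  rewrite sumR_map_scal. unfold mut_expect. ring.
Qed.

Lemma offspring_weights_nonneg (n : nat) (P : list (list bool)) : (0 < n)%nat ->
  Forall (fun wa => 0 <= fst wa) (offspring_dist n P).
Proof.
  intros Hn. apply Forall_forall. intros [w y] Hin. unfold offspring_dist in Hin.
  apply in_flat_map in Hin. destruct Hin as [x [HxP Hin]].
  apply in_map_iff in Hin. destruct Hin as [m [Heq _]]. injection Heq as <- _. simpl.
  assert (HP : (0 < length P)%nat) by (destruct P; [destruct HxP | simpl; lia]).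
  apply Rmult_le_pos; [apply Rlt_le, Rinv_0_lt_compat, lt_0_INR, HP | apply mask_prob_nonneg, Hn].
Qed.

Lemma offspring_mass (n : nat) (P : list (list bool)) :
  (0 < length P)%nat -> Forall (fun x => length x = n) P ->
  expect1 (offspring_dist n P) (fun _ => 1) = 1.
Proof.
  intros HP Hlen. rewrite offspring_expect.
  rewrite (map_ext_in _ (fun _ => 1))
    by (intros x Hx; apply mut_expect_mass, (proj1 (Forall_forall _ _) Hlen x Hx)).
  rewrite sumR_map_const. field. apply not_0_INR. lia.
Qed.

Lemma offspring_potential (eps : R) (n : nat) (P : list (list bool)) :
  0 < eps < 1 -> (2 <= n)%nat -> (0 < length P)%nat -> Forall (fun x => length x = n) P ->
  expect1 (offspring_dist n P) (g eps n)
  <= / INR (length P) * (beta eps * gpop eps n P + INR (length P)).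
Proof.
  intros He Hn HP Hlen. rewrite offspring_expect.
  apply Rmult_le_compat_l; [apply Rlt_le, Rinv_0_lt_compat, lt_0_INR, HP |].
  apply Rle_trans with (sumR (map (fun x => beta eps * g eps n x + 1) P)).
  - apply sumR_map_le. intros x Hx.
    apply mutant_potential; [exact He | exact Hn | exact (proj1 (Forall_forall _ _) Hlen x Hx)].
  - rewrite sumR_map_add, sumR_map_scal, sumR_map_const, gpop_sumR. right; ring.
Qed.

Theorem lemma3 :
  forall (eps : R), 0 < eps < 1 ->
  forall (mu lam : nat), (0 < mu)%nat -> (0 < lam)%nat ->
  INR lam <= (1 - eps) * exp 1 * INR mu ->
  exists n0 : nat, forall n : nat, (n0 <= n)%nat ->
  forall P : list (list bool),
    length P = mu -> Forall (fun x => length x = n) P ->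
    expect_iid (offspring_dist n P) lam (fun O => gpop eps n (select mu O))
      <= gpop eps n P + 2 * INR lam.
Proof.
  intros eps He mu lam Hmu Hlam Hrate. exists 2%nat. intros n Hn P HP Hlen.
  set (d := offspring_dist n P). set (G := gpop eps n P).
  assert (Hmass : expect1 d (fun _ => 1) = 1) by (apply offspring_mass; [lia | exact Hlen]).
  (* selection only decreases the potential; the rest is additive over offspring *)
  apply Rle_trans with (expect_iid d lam (fun O => 0 + sumR (map (g eps n) O))).
  { apply expect_iid_le; [apply offspring_weights_nonneg; lia |].
    intros O. rewrite <- gpop_sumR. pose proof (gpop_select eps n mu O He). lra. }
  rewrite expect_iid_sum by exact Hmass.
  pose proof (offspring_potential eps n P He Hn ltac:(lia) Hlen) as Hoff.
  rewrite HP in Hoff. fold d G in Hoff.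
  (* the reproductive rate is compensated by the drift: [lam beta <= mu] *)
  assert (Hmu0 : 0 < INR mu) by (apply lt_0_INR; exact Hmu).
  assert (Hlam0 : 0 < INR lam) by (apply lt_0_INR; exact Hlam).
  assert (Hrho : INR lam * beta eps / INR mu <= 1).
  { pose proof (beta_reproduction eps He).
    assert (0 < beta eps) by apply exp_pos.
    apply (Rmult_le_reg_r (INR mu)); [exact Hmu0 |].
    replace (INR lam * beta eps / INR mu * INR mu) with (beta eps * INR lam) by (field; lra). nra. }
  assert (HG : 0 <= G)
    by (unfold G; rewrite gpop_sumR; apply sumR_map_nonneg; intros; apply g_nonneg, He).
  assert (Hsplit : INR lam * (/ INR mu * (beta eps * G + INR mu))
                   = INR lam * beta eps / INR mu * G + INR lam)
    by (field; lra).
  assert (INR lam * expect1 d (g eps n) <= INR lam * (/ INR mu * (beta eps * G + INR mu)))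
    by (apply Rmult_le_compat_l; lra).
  nra.
Qed.
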